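(* Let $(X,\mathrm{d})$ be a metric space, $P\subseteq X$ finite, $\varepsilon>0$, $q\in X$, and let $y$ be any point of $\varepsilon\text{-}\mathrm{NN}_P(q)$. Then every point $p\in \mathrm{RNN}_P(q)$ such that $\mathrm{d}(p,P)\ge\frac{\mathrm{d}(q,y)}{\varepsilon}$ belongs to $\varepsilon\text{-}\mathrm{RNN}_P(y)\cup\{y\}$.
   Context: For $x\in X$, $\mathrm{d}(x,P)=\min\{\mathrm{d}(x,p):p\in P\setminus\{x\}\}$. $\varepsilon\text{-}\mathrm{NN}_P(x)$ is the set of $p\in P\setminus\{x\}$ with $\mathrm{d}(x,p)\le(1+\varepsilon)\mathrm{d}(x,P)$. $\mathrm{RNN}_P(x)$ is the set of $p\in P\setminus\{x\}$ such that $x$ is a nearest neighbor of $p$ among $(P\cup\{x\})\setminus\{p\}$, i.e. $\mathrm{d}(p,x)\le\mathrm{d}(p,P)$. $\varepsilon\text{-}\mathrm{RNN}_P(x)$ is the set of $p\in P\setminus\{x\}$ such that $x$ is an $\varepsilon$-nearest neighbor of $p$ among $(P\cup\{x\})\setminus\{p\}$, i.e. $\mathrm{d}(p,x)\le(1+\varepsilon)\mathrm{d}(p,P)$. *)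

From HB Require Import structures.
From mathcomp Require Import all_boot all_order all_algebra.
From mathcomp Require Import reals constructive_ereal.
Set Implicit Arguments. Unset Strict Implicit. Unset Printing Implicit Defensive.
Import Order.TTheory GRing.Theory Num.Theory.
Local Open Scope ring_scope.
Local Open Scope ereal_scope.

Definition is_metric (R : realType) (X : Type) (d : X -> X -> R) : Prop :=
  [/\ forall x y, (0 <= d x y)%R,
      forall x y, d x y = 0%R <-> x = y,
      forall x y, d x y = d y x
    & forall x y z, (d x z <= d x y + d y z)%R].

(* d(x,P) = min { d(x,p) : p in P \ {x} }  (= +oo when P \ {x} is empty). *)
Definition distP (R : realType) (X : eqType) (d : X -> X -> R) (P : seq X)
  (x : X) : \bar R :=
  \big[Order.min/+oo]_(p <- P | p != x) (d x p)%:E.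

Definition epsNN (R : realType) (X : eqType) (d : X -> X -> R) (P : seq X)
  (eps : R) (x p : X) : Prop :=
  [/\ p \in P, p != x & (d x p)%:E <= (1 + eps)%:E * distP d P x].

Definition RNN (R : realType) (X : eqType) (d : X -> X -> R) (P : seq X)
  (x p : X) : Prop :=
  [/\ p \in P, p != x & (d p x)%:E <= distP d P p].

Definition epsRNN (R : realType) (X : eqType) (d : X -> X -> R) (P : seq X)
  (eps : R) (x p : X) : Prop :=
  [/\ p \in P, p != x & (d p x)%:E <= (1 + eps)%:E * distP d P p].

(* By the triangle inequality d(p,y) <= d(p,q) + d(q,y); the first term is at
   most d(p,P) because q is a nearest neighbour of p, and the second is at most
   eps d(p,P) by assumption, so d(p,y) <= (1 + eps) d(p,P). *)
From HB Require Import structures.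
From mathcomp Require Import all_boot all_order all_algebra.
From mathcomp Require Import reals constructive_ereal.
From mathcomp Require Import lra.
Import Order.TTheory GRing.Theory Num.Theory.
Local Open Scope ring_scope.
Local Open Scope ereal_scope.

Lemma lee_addr_scale {R : realType} {a b eps : R} {r : \bar R} :
  (0 < eps)%R -> a%:E <= r -> (b / eps)%:E <= r ->
  (a + b)%:E <= (1 + eps)%:E * r.
Proof.
move=> eps_gt0; case: r => [r| |] //; last first.
  by move=> _ _; rewrite gt0_muley ?leey // lte_fin; lra.
rewrite !lee_fin => le_ar le_br.
have le_b : (b <= eps * r)%R by rewrite -ler_pdivrMl // mulrC.
lra.
Qed.

Theorem mainTheorem10 (R : realType) (X : eqType) (d : X -> X -> R)
  (P : seq X) (eps : R) (q y : X) :
  is_metric d -> (0 < eps)%R -> epsNN d P eps q y ->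
  forall p : X, RNN d P q p -> (d q y / eps)%:E <= distP d P p ->
  epsRNN d P eps y p \/ p = y.
Proof.
move=> [_ _ _ d_triangle] eps_gt0 _ p [pP p_neq_q d_pq] d_qy.
have [->|p_neq_y] := eqVneq p y; first by right.
left; split => //.
have d_py : (d p y)%:E <= (d p q + d q y)%:E by rewrite lee_fin d_triangle.
apply: (le_trans d_py).
exact: lee_addr_scale eps_gt0 d_pq d_qy.
Qed.
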